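(* Let $n\ge 3$. For every initial coloring of the cycle $C_n$, the stabilization time of the Majority Model (MM) is at most $\lceil n/2\rceil-1$, and this bound is tight, i.e., there is an initial coloring of $C_n$ for which the stabilization time equals $\lceil n/2\rceil-1$.
   Context: A coloring of a graph is a map from its nodes to $\{b,w\}$. In the Majority Model (MM), all nodes update simultaneously in each round: a node adopts the color strictly more frequent among its neighbors in the previous round, and keeps its current color in case of a tie. Since MM is deterministic and there are finitely many colorings, from any initial coloring the sequence of colorings eventually enters a cycle of colorings; the stabilization time is the number of rounds needed to reach this cycle. *)

From mathcomp Require Import all_boot.
Set Implicit Arguments. Unset Strict Implicit. Unset Printing Implicit Defensive.

(* Colorings of a finite graph: true = b, false = w. *)
Definition coloring (T : finType) := {ffun T -> bool}.

Definition mm_step (T : finType) (adj : rel T) (c : coloring T) : coloring T :=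
  [ffun v =>
     let nb := #|[pred u | adj v u && c u]| in
     let nw := #|[pred u | adj v u && ~~ c u]| in
     if nw < nb then true else if nb < nw then false else c v].

Definition mm_iter (T : finType) (adj : rel T) (t : nat) (c : coloring T) :=
  iter t (mm_step adj) c.

Definition mm_in_cycle (T : finType) (adj : rel T) (c : coloring T) (t : nat) :=
  exists p, 0 < p /\ mm_iter adj (t + p) c = mm_iter adj t c.

Definition is_stab_time (T : finType) (adj : rel T) (c : coloring T) (t : nat) :=
  mm_in_cycle adj c t /\ forall s, s < t -> ~ mm_in_cycle adj c s.

Definition cycle_adj (n : nat) : rel 'I_n :=
  fun i j => (j == (i.+1 %% n) :> nat) || (i == (j.+1 %% n) :> nat).
Arguments cycle_adj : clear implicits.

From mathcomp Require Import all_boot zify.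
Set Implicit Arguments. Unset Strict Implicit. Unset Printing Implicit Defensive.

(* Call a vertex stable when it agrees with a neighbour. On a cycle a stable
   vertex keeps its colour forever and makes both neighbours stable one round
   later, while an unstable vertex flips. If no vertex is stable, every vertex
   flips at every round and the coloring has period 2 from the start.
   Otherwise there are two adjacent stable vertices, every vertex lies at
   distance at most T = (n-1)/2 = ceil(n/2) - 1 from one of them, and the
   coloring is fixed from round T on. Tightness: when colours alternate
   except at one vertex, the unstable vertices form an arc of 2T - 1 vertices
   that loses one vertex at each end per round, so its centre still flips at
   round T. *)

Section Dynamics.
Variables (T : finType) (adj : rel T) (c : coloring T).
Local Notation step := (mm_step adj).
Local Notation X t := (mm_iter adj t c).

Lemma mm_iterD s t : X (s + t) = iter s step (X t).
Proof. exact: iterD. Qed.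

Lemma mm_iter_fixpoint t k : step (X t) = X t -> X (t + k) = X t.
Proof. by move=> fix_t; elim: k => [|k IHk]; rewrite ?addn0 // addnS /= IHk. Qed.

Lemma mm_in_cycle_fixpoint t : step (X t) = X t -> mm_in_cycle adj c t.
Proof. by exists 1; rewrite addn1. Qed.

Lemma mm_in_cycle_le s t : s <= t -> mm_in_cycle adj c s -> mm_in_cycle adj c t.
Proof.
move=> le_st [p [p_gt0 per]]; exists p; split=> //.
by rewrite -(subnK le_st) -addnA mm_iterD per -mm_iterD.
Qed.

Lemma mm_in_cycle_fixpoint_eq s t :
  mm_in_cycle adj c s -> step (X t) = X t -> X s = X t.
Proof.
case=> p [p_gt0 per] fix_t.
have per_k k : X (s + k * p) = X s.
  elim: k => [|k IHk]; first by rewrite addn0.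
  by rewrite mulSnr addnA addnC mm_iterD IHk -mm_iterD addnC.
have le_t : t <= s + t * p by rewrite (leq_trans (leq_pmulr t p_gt0)) ?leq_addl.
by rewrite -(per_k t) -(subnKC le_t) mm_iter_fixpoint.
Qed.

Lemma stab_time_le s t : is_stab_time adj c t -> mm_in_cycle adj c s -> t <= s.
Proof. by case=> _ min_t cyc_s; rewrite leqNgt; apply/negP => /min_t. Qed.

Lemma is_stab_time_fixpoint t :
  0 < t -> step (X t) = X t -> X t.-1 != X t -> is_stab_time adj c t.
Proof.
move=> t_gt0 fix_t moved; split; first exact: mm_in_cycle_fixpoint.
move=> s lt_st /mm_in_cycle_fixpoint_eq/(_ fix_t) eq_st; apply/(negP moved)/eqP.
have le_st : s <= t.-1 by rewrite -ltnS prednK.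
by rewrite -(subnK le_st) mm_iterD eq_st -mm_iterD addnC mm_iter_fixpoint.
Qed.

End Dynamics.

Lemma card_pred2I (T : finType) (a b : T) (P : pred T) :
  #|[pred u | ((u == a) || (u == b)) && P u]| = P a + ((b != a) && P b).
Proof.
rewrite (cardD1 a) (cardD1 b) eq_card0 => [|u]; rewrite !inE ?eqxx /=.
  by rewrite orbT addn0.
by case: (u =P b); case: (u =P a).
Qed.

Section Cycle.
Variable n : nat.
Local Notation step := (mm_step (cycle_adj n)).

Lemma cycle_adjE (v u : 'I_n) :
  cycle_adj n v u = (u == ordS v) || (u == ord_pred v).
Proof. by rewrite -(can2_eq (@ordSK n) (@ord_predK n)) [ordS u == v]eq_sym. Qed.

Lemma card_cycle_adj (v : 'I_n) (P : pred 'I_n) :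
  #|[pred u | cycle_adj n v u && P u]|
    = P (ordS v) + ((ord_pred v != ordS v) && P (ord_pred v)).
Proof. by rewrite -card_pred2I; apply: eq_card => u; rewrite !inE cycle_adjE. Qed.

Lemma mm_step_cycleE (x : coloring 'I_n) v :
  step x v = if x (ordS v) == x (ord_pred v) then x (ordS v) else x v.
Proof.
rewrite ffunE /= (card_cycle_adj v x) (card_cycle_adj v (fun u => ~~ x u)).
case: (ord_pred v =P ordS v) => [->|_]; first by case: (x (ordS v)).
by case: (x (ordS v)); case: (x (ord_pred v)); case: (x v).
Qed.

Definition stable (x : coloring 'I_n) v :=
  (x v == x (ordS v)) || (x v == x (ord_pred v)).

(* A round recolours a vertex from its two neighbours only, so each rule below
   involves at most the seven vertices around [v] and is checked on all their
   colourings. *)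
Local Ltac by_local_colors x v :=
  rewrite /stable !mm_step_cycleE ?ordSK ?ord_predK;
  by case: (x (ord_pred (ord_pred (ord_pred v))));
     case: (x (ord_pred (ord_pred v))); case: (x (ord_pred v)); case: (x v);
     case: (x (ordS v)); case: (x (ordS (ordS v)));
     case: (x (ordS (ordS (ordS v)))).

Lemma stable_step_eq x v : stable x v -> step x v = x v.
Proof. by_local_colors x v. Qed.

Lemma unstable_step_eq x v : ~~ stable x v -> step x v = ~~ x v.
Proof. by_local_colors x v. Qed.

Lemma stable_step x v : stable x v -> stable (step x) v.
Proof. by_local_colors x v. Qed.

Lemma stable_step_ordS x v : stable x v -> stable (step x) (ordS v).
Proof. by_local_colors x v. Qed.

Lemma stable_step_ord_pred x v : stable x v -> stable (step x) (ord_pred v).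
Proof. by_local_colors x v. Qed.

Lemma unstable_step x v :
  ~~ stable x (ord_pred v) -> ~~ stable x v -> ~~ stable x (ordS v) ->
  ~~ stable (step x) v.
Proof. by_local_colors x v. Qed.

Lemma unstable_period2 x : (forall v, ~~ stable x v) -> step (step x) = x.
Proof.
move=> unst; apply/ffunP => v.
have unst_step : ~~ stable (step x) v by apply: unstable_step.
by rewrite (unstable_step_eq unst_step) (unstable_step_eq (unst v)) negbK.
Qed.

Lemma val_iter_ordS j (a : 'I_n) : val (iter j (@ordS n) a) = (a + j) %% n.
Proof.
elim: j => [|j IHj] /=; first by rewrite addn0 modn_small.
by rewrite IHj -addn1 modnDml -addnA addn1.
Qed.

Lemma iter_ordS_n (a : 'I_n) : iter n (@ordS n) a = a.
Proof. by apply: val_inj; rewrite val_iter_ordS modnDr modn_small. Qed.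

Lemma exists_iter_ordS (a v : 'I_n) : exists2 j, j < n & iter j (@ordS n) a = v.
Proof.
have n_gt0 : 0 < n by case: n a => [[]|].
exists ((v + (n - a)) %% n); first by rewrite ltn_mod.
apply: val_inj; rewrite val_iter_ordS modnDmr addnCA subnKC ?(ltnW (ltn_ord a)) //.
by rewrite modnDr modn_small.
Qed.

Lemma val_ordS (i : 'I_n) : i.+1 < n -> val (ordS i) = i.+1.
Proof. exact: modn_small. Qed.

Lemma val_ord_pred (i : 'I_n) : 0 < i -> val (ord_pred i) = i.-1.
Proof.
move=> i_gt0; rewrite /= -subn1 -addnBAC // subn1 modnDr modn_small //.
exact: leq_ltn_trans (leq_pred i) (ltn_ord i).
Qed.

Variable c : coloring 'I_n.
Local Notation X t := (mm_iter (cycle_adj n) t c).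

Lemma stable_iter t k v : stable (X t) v -> stable (X (t + k)) v.
Proof. by elim: k => [|k IHk]; rewrite ?addn0 // addnS => /IHk /stable_step. Qed.

Lemma stable_spread_ordS t j a :
  stable (X t) a -> stable (X (t + j)) (iter j (@ordS n) a).
Proof. by elim: j => [|j IHj]; rewrite ?addn0 // addnS => /IHj /stable_step_ordS. Qed.

Lemma stable_spread_ord_pred t j v :
  stable (X t) (iter j (@ordS n) v) -> stable (X (t + j)) v.
Proof.
elim: j v => [|j IHj] v; rewrite ?addn0 // addnS iterSr => /IHj.
by move/stable_step_ord_pred; rewrite ordSK.
Qed.

Lemma stable_everywhere a :
  stable c a -> stable c (ordS a) -> forall v, stable (X n.-1./2) v.
Proof.
move=> st_a st_Sa v; have [j lt_jn def_v] := exists_iter_ordS (ordS a) v.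
have half_ge : n.-1 <= (n.-1./2).*2.+1 by rewrite -leq_half_double.
case: (leqP j n.-1./2) => [le_jT | lt_Tj].
  rewrite -(subnKC le_jT); apply: stable_iter.
  by rewrite -def_v; exact: (stable_spread_ordS (t := 0)).
have back : iter (n - j.+1) (@ordS n) v = a.
  by rewrite -def_v -iterSr -iterD subnK // iter_ordS_n.
rewrite -(@subnKC (n - j.+1) n.-1./2); last by lia.
by apply: stable_iter; apply: (stable_spread_ord_pred (t := 0)); rewrite back.
Qed.

Lemma stable_fixpoint a : stable c a -> step (X n.-1./2) = X n.-1./2.
Proof.
move=> st_a; have [b st_b st_Sb] : exists2 b, stable c b & stable c (ordS b).
  case/orP: (st_a) => /eqP eq_a; [exists a | exists (ord_pred a)];
    by rewrite /stable ?ordSK ?ord_predK -?eq_a eqxx ?orbT.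
by apply/ffunP => v; apply/stable_step_eq/(stable_everywhere st_b st_Sb).
Qed.

Lemma cycle_mm_in_cycle : mm_in_cycle (cycle_adj n) c n.-1./2.
Proof.
case: (pickP (stable c)) => [a /stable_fixpoint/mm_in_cycle_fixpoint // | unst].
apply: (mm_in_cycle_le (leq0n _)); exists 2; split=> //.
by apply: unstable_period2 => v; rewrite unst.
Qed.

End Cycle.

Section Tight.
Variable n : nat.
Hypothesis n_ge3 : 3 <= n.

(* Colours alternate except that vertex [n-1] is white; the unstable vertices
   are then exactly [1, ..., 2T-1], centred at [T = n.-1./2]. *)
Definition tight_coloring : coloring 'I_n := [ffun i : 'I_n => odd i && (i.+1 < n)].
Local Notation X t := (mm_iter (cycle_adj n) t tight_coloring).

Lemma tight_coloringE (i : 'I_n) : i <= (n.-1./2).*2 -> tight_coloring i = odd i.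
Proof.
rewrite ffunE; case: ltnP => [_ _|ge_n le_i]; first by rewrite andbT.
have double_half_le : (n.-1./2).*2 <= n.-1 by rewrite -geq_half_double.
have -> : nat_of_ord i = (n.-1./2).*2 by have := ltn_ord i; lia.
by rewrite odd_double.
Qed.

Lemma tight_coloring_unstable t (i : 'I_n) :
  t < i -> i + t < (n.-1./2).*2 -> ~~ stable (X t) i.
Proof.
have double_half_le : (n.-1./2).*2 <= n.-1 by rewrite -geq_half_double.
elim: t i => [|t IHt] i lt_ti lt_iT.
  rewrite /stable /= !tight_coloringE ?val_ordS ?val_ord_pred //; lia.
apply: (@unstable_step n (X t));
  by apply: IHt; rewrite ?val_ordS ?val_ord_pred //; lia.
Qed.

Lemma tight_coloring_stab_time :
  is_stab_time (cycle_adj n) tight_coloring n.-1./2.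
Proof.
have T_gt0 : 0 < n.-1./2 by rewrite geq_half_double; lia.
have T_lt : n.-1./2 < n by rewrite ltn_half_double; lia.
have n_gt0 : 0 < n by lia.
have fix_T : mm_step (cycle_adj n) (X n.-1./2) = X n.-1./2.
  apply: (@stable_fixpoint _ _ (Ordinal n_gt0)).
  by rewrite /stable !ffunE /= add0n (@modn_small n.-1)
       ?prednK ?ltnn ?andbF ?orbT //; lia.
apply: is_stab_time_fixpoint => //; pose m := Ordinal T_lt.
have unst : ~~ stable (X n.-1./2.-1) m.
  by apply: tight_coloring_unstable => /=; lia.
have flip : X n.-1./2 m = ~~ X n.-1./2.-1 m.
  by rewrite -{1}(prednK T_gt0); exact: unstable_step_eq.
by apply/eqP => eqX; move: flip; rewrite eqX; case: (X n.-1./2 m).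
Qed.

End Tight.

Theorem theorem2p3 (n : nat) (hn : 3 <= n) :
  (forall (c : coloring 'I_n) (t : nat),
     is_stab_time (cycle_adj n) c t -> t <= (n.+1)./2 - 1) /\
  (exists c : coloring 'I_n, is_stab_time (cycle_adj n) c ((n.+1)./2 - 1)).
Proof.
have -> : (n.+1)./2 - 1 = n.-1./2 by case: n hn => //= k _; rewrite subn1.
split=> [c t /stab_time_le -> // | ]; first exact: cycle_mm_in_cycle.
by exists (tight_coloring n); exact: tight_coloring_stab_time.
Qed.
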